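(* In the setting described in the context, the following are equivalent: (1) all jumps of the upper ramification filtration of $G=\mathrm{Gal}(F/k(x))$ at $P$ are integers, i.e. $\phi(b_i)\in\mathbb{Z}$ for all $i=1,\dots,h-1$; (2) for every $i=2,\dots,h-1$ the minimal term of $D_i$ has the form $\min D_i=a_i\,x^{\nu_{i,0}}\,\bar f_{i-1}$ for some $a_i\in k^*$ and integer $\nu_{i,0}\ge 0$; that is, writing $\min D_i=a_i x^{\nu_{i,0}}\bar f_1^{\nu_{i,1}}\cdots\bar f_{i-1}^{\nu_{i,i-1}}$, one has $\nu_{i,j}=0$ for $1\le j\le i-2$ and $\nu_{i,i-1}=1$.
   Context: Let $k$ be an algebraically closed field of characteristic $p\ge 5$. Let $\pi:X\to\mathbb{P}^1$ be a Galois cover of curves over $k$ (a Harbater–Katz–Gabber cover) with function field $F\supset k(x)$ and Galois group $G$, such that the only ramified point of $\mathbb{P}^1$ is $P_\infty$ (the pole of $x$), which is totally and wildly ramified, and $G$ is a $p$-group equal to its first ramification group $G_1$ (no tame ramification). Let $P$ be the unique point of $X$ over $P_\infty$ and $v$ the valuation of $F$ at $P$; thus $v(x)=-|G|$. The lower ramification groups at $P$ are $G_i=\{\sigma\in G: v(\sigma(t)-t)\ge i+1\}$ for a uniformizer $t$ at $P$. Let $b_1<b_2<\dots<b_{h-1}$ be the jumps of the lower ramification filtration (integers $i\ge1$ with $G_i\ne G_{i+1}$), so $G=G_{b_1}\gneq G_{b_2}\gneq\cdots\gneq G_{b_{h-1}}\gneq 1$; set $G_{b_h}=1$ and $[G_{b_i}:G_{b_{i+1}}]=p^{n_i}$.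 Each $b_i$ is prime to $p$. The Herbrand function is $\phi(u)=\int_0^u \frac{dt}{[G_0:G_t]}$ for $u\ge0$, and the upper jumps are the numbers $\phi(b_i)$; explicitly $\phi(b_i)=b_1+\sum_{j=2}^{i}\frac{b_j-b_{j-1}}{p^{n_1+\cdots+n_{j-1}}}$. Let $F_i=F^{G_{b_i}}$, so $F=F_h>F_{h-1}>\cdots>F_1=k(x)$. There are elements $\bar f_i\in F_{i+1}$ ($i=1,\dots,h-1$) with $F_{i+1}=F_i(\bar f_i)$, whose only pole is at $P$, with $v(\bar f_i)=-\bar m_i$ where $\bar m_i=p^{n_{i+1}+\cdots+n_{h-1}}b_i$, and whose minimal polynomial over $F_i$ is $X^{p^{n_i}}+a^{(i)}_{n_i-1}X^{p^{n_i-1}}+\cdots+a^{(i)}_0X-D_i$ with $a^{(i)}_j\in k$ and $D_i\in F_i$. Each $D_i$ has a unique expression as a finite sum $D_i=\sum \gamma^{(i)}_{\ell_0,\dots,\ell_{i-1}}x^{\ell_0}\bar f_1^{\ell_1}\cdots\bar f_{i-1}^{\ell_{i-1}}$ with $\gamma\in k$, $\ell_0\ge0$, $0\le\ell_j<p^{n_j}$; distinct such monomials have distinct valuations $v$. $\min D_i$ denotes the monomial summand (with its nonzero coefficient $a_i\in k^*$) of smallest valuation $v$; it satisfies $v(\min D_i)=v(D_i)=-p^{n_i}\bar m_i$. *)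

From HB Require Import structures.
From mathcomp Require Import all_boot all_order all_algebra all_fingroup all_solvable all_field.
Set Implicit Arguments. Unset Strict Implicit. Unset Printing Implicit Defensive.
Import Order.TTheory GRing.Theory Num.Theory.
Local Open Scope ring_scope.

Definition Kx (k : closedFieldType) : fieldType := {fraction {poly k}}.

Section Defs.
Variables (k : closedFieldType) (F : splittingFieldType (Kx k)).

Definition cst (c : k) : F := (tofrac (c%:P) : Kx k)%:A.
Definition xF : F := (tofrac ('X : {poly k}) : Kx k)%:A.

Definition Gal_F : {set gal_of (L:=F) fullv} := ('Gal(fullv / 1%VS))%g.

(* v is a normalized discrete valuation of F trivial on k, i.e. a point of
   the curve X (values on nonzero elements only; v 0 is irrelevant). *)
Definition dval (v : F -> int) : Prop :=
  [/\ forall a b : F, a != 0 -> b != 0 -> v (a * b) = v a + v b,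
      forall a b : F, a != 0 -> b != 0 -> a + b != 0 ->
        Num.min (v a) (v b) <= v (a + b),
      forall c : k, c != 0 -> v (cst c) = 0
    & exists t : F, t != 0 /\ v t = 1].

Definition ramgrp (v : F -> int) (t : F) (i : nat) : {set gal_of (L:=F) fullv} :=
  [set s in Gal_F | (s t == t) || ((i.+1)%:Z <= v (s t - t))].

(* Herbrand function at an integer u >= 0:
   phi(u) = int_0^u dt/[G_0:G_t] = sum_{j=1}^u |G_j|/|G_0|
   (G_t = G_{ceil t} for real t). *)
Definition herbrand (v : F -> int) (t : F) (u : nat) : rat :=
  \sum_(1 <= j < u.+1) ((#|ramgrp v t j|)%:R / (#|ramgrp v t 0|)%:R).

Definition Gb (v : F -> int) (t : F) (h : nat) (b : nat -> nat) (i : nat)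
  : {set gal_of (L:=F) fullv} :=
  if (0 < i < h)%N then ramgrp v t (b i) else [set 1%g].

Definition Fi (v : F -> int) (t : F) (h : nat) (b : nat -> nat) (i : nat)
  : {vspace F} := fixedField (Gb v t h b i).

Definition mono (fbar : nat -> F) (e : seq nat) : F :=
  xF ^+ (nth 0%N e 0) * \prod_(1 <= j < size e) fbar j ^+ (nth 0%N e j).

Definition min_term (v : F -> int) (fbar : nat -> F) (s : seq (seq nat))
  (e : seq nat) : Prop :=
  e \in s /\ forall e', e' \in s -> e' != e -> v (mono fbar e) < v (mono fbar e').

End Defs.

Definition mbar (p h : nat) (n b : nat -> nat) (i : nat) : nat :=
  (p ^ (\sum_(i.+1 <= j < h) n j) * b i)%N.

(* Write d_i = n_1 + ... + n_(i-1) and S_i = n_i + ... + n_(h-1).  The Herbrand function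
   gives phi(b_1) = b_1 and phi(b_i) - phi(b_(i-1)) = (b_i - b_(i-1)) / p^(d_i), so all
   upper jumps are integers iff b_i = c p^(d_i) + b_(i-1) for some natural c, for each i.
   On the other side, the monomials of D_i have pairwise distinct valuations, so v(D_i)
   = -p^(S_i) b_i is the valuation of the minimal term, while
   v(x^c fbar_(i-1)) = -p^(S_i) (c p^(d_i) + b_(i-1)).  Since n_(i-1) > 0 (b_(i-1) is a
   jump), x^c fbar_(i-1) is an admissible monomial, and injectivity of v on admissible
   monomials makes it the minimal term of D_i exactly when b_i = c p^(d_i) + b_(i-1). *)

From HB Require Import structures.
From mathcomp Require Import all_boot all_order all_algebra all_fingroup all_solvable all_field.
From mathcomp Require Import zify ring.
Import Order.TTheory GRing.Theory Num.Theory.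
Set Implicit Arguments.
Unset Strict Implicit.
Unset Printing Implicit Defensive.
Local Open Scope ring_scope.

Section Valuation.
Variables (R : idomainType) (v : R -> int).
Hypothesis valM : forall {a b : R}, a != 0 -> b != 0 -> v (a * b) = v a + v b.
Hypothesis val_add : forall {a b : R}, a != 0 -> b != 0 -> a + b != 0 ->
  Num.min (v a) (v b) <= v (a + b).

Lemma val1 : v 1 = 0.
Proof. by apply: (@addrI _ (v 1)); rewrite -valM ?oner_neq0 // mulr1 addr0. Qed.

Lemma valN a : a != 0 -> v (- a) = v a.
Proof.
have vN1 : v (-1) = 0.
  have N1 : (-1 : R) != 0 by rewrite oppr_eq0 oner_neq0.
  by have := valM N1 N1; rewrite mulrNN mulr1 val1; lia.
by move=> a0; rewrite -mulN1r valM ?vN1 ?add0r // oppr_eq0 oner_neq0.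
Qed.

Lemma valX a m : a != 0 -> v (a ^+ m) = m%:Z * v a.
Proof.
move=> a0; elim: m => [|m IH]; first by rewrite expr0 val1 mul0r.
by rewrite exprS valM ?expf_neq0 // IH intS mulrDl mul1r.
Qed.

Let above V r := (r == 0) || (V < v r).

Lemma above_add V a r : above V a -> above V r -> above V (a + r).
Proof.
rewrite /above; have [->|a0] := eqVneq a 0; first by rewrite add0r.
have [->|r0] := eqVneq r 0; first by rewrite addr0 (negbTE a0).
have [-> //|ar0] := eqVneq (a + r) 0.
by move=> /= Va Vr; apply: lt_le_trans (val_add a0 r0 ar0); rewrite lt_min Va.
Qed.

Lemma val_add_above a r : a != 0 -> above (v a) r -> v (a + r) = v a.
Proof.
move=> a0; rewrite /above; have [->|r0 /= ar] := eqVneq r 0; first by rewrite addr0.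
have ar0 : a + r != 0.
  by apply: contraTneq ar => /eqP; rewrite addr_eq0 => /eqP->; rewrite valN // ltxx.
apply/eqP; rewrite eq_le; apply/andP; split.
  have Nr0 : - r != 0 by rewrite oppr_eq0.
  have := val_add ar0 Nr0; rewrite addrK valN // => /(_ a0).
  by rewrite ge_min => /orP[// | /(lt_le_trans ar)]; rewrite ltxx.
have := val_add a0 r0 ar0; rewrite ge_min => /orP[// | /(lt_le_trans ar)].
exact: ltW.
Qed.

Lemma val_sum_min (I : eqType) (s : seq I) (e : I) (g : I -> R) :
  uniq s -> e \in s -> (forall e', e' \in s -> g e' != 0) ->
  (forall e', e' \in s -> e' != e -> v (g e) < v (g e')) ->
  v (\sum_(e' <- s) g e') = v (g e).
Proof.
move=> us es gnz gmin; rewrite (bigD1_seq e es us) /= val_add_above ?gnz // big_seq_cond.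
apply: (big_ind (above _)) => [|? ?|e' /andP[es' ne]]; first by rewrite /above eqxx.
  exact: above_add.
by rewrite /above gmin ?orbT.
Qed.

End Valuation.

Lemma Qint_dvdn (m d : nat) : (0 < d)%N ->
  ((m%:R / d%:R : rat) \is a Num.int) = (d %| m)%N.
Proof.
move=> d0; apply/idP/idP => [mdZ | /Qnat_dvd/intr_nat //].
have /natrP[c mdc] : (m%:R / d%:R : rat) \is a Num.nat.
  by rewrite -intrEge0 // divr_ge0.
apply/dvdnP; exists c; apply/eqP; rewrite -(eqr_nat rat) natrM -mdc divfK //.
by rewrite pnatr_eq0 -lt0n.
Qed.

Section RamificationFiltration.
Variables (k : closedFieldType) (F : splittingFieldType (Kx k)) (v : F -> int) (t : F).

Lemma ramgrp_subS u : ramgrp v t u.+1 \subset ramgrp v t u.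
Proof.
apply/subsetP => s; rewrite !inE => /andP[-> /orP[-> // | lt_us]].
by rewrite (le_trans _ lt_us) ?orbT // lez_nat.
Qed.

Lemma ramgrp_sub_Gal u : ramgrp v t u \subset Gal_F F.
Proof. by apply/subsetP => s; rewrite inE => /andP[]. Qed.

Lemma herbrand0 : herbrand v t 0 = 0.
Proof. by rewrite /herbrand big_geq. Qed.

Lemma herbrand_const u w (H : {set gal_of (L:=F) fullv}) : (u <= w)%N ->
  (forall j, (u < j <= w)%N -> ramgrp v t j = H) ->
  herbrand v t w = herbrand v t u + (w - u)%:R * (#|H|%:R / #|ramgrp v t 0|%:R).
Proof.
move=> uw HH; rewrite /herbrand (@big_cat_nat _ _ _ u.+1 1 w.+1) //=; congr (_ + _).
rewrite (eq_big_nat _ _ (F2 := fun=> #|H|%:R / #|ramgrp v t 0|%:R)).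
  by rewrite sumr_const_nat subSS [RHS]mulr_natl.
by move=> j /andP[uj jw]; rewrite HH // uj.
Qed.

Variables (h : nat) (b n : nat -> nat) (p : nat).
Hypotheses (p_gt0 : (0 < p)%N) (ramgrp1 : ramgrp v t 1 = Gal_F F).
Hypothesis b_gt0 : forall i, (0 < i < h)%N -> (0 < b i)%N.
Hypothesis bS : forall i, (0 < i)%N -> (i.+1 < h)%N -> (b i < b i.+1)%N.
Hypothesis ramgrp_jump : forall u, (0 < u)%N ->
  ramgrp v t u != ramgrp v t u.+1 <-> exists2 i, (0 < i < h)%N & u = b i.
Hypothesis card_Gb_step : forall i, (0 < i < h)%N ->
  #|Gb v t h b i| = (p ^ n i * #|Gb v t h b i.+1|)%N.

Lemma b_ltn l l' : (0 < l)%N -> (l < l')%N -> (l' < h)%N -> (b l < b l')%N.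
Proof.
move=> l0; elim: l' => // l' IH; rewrite ltnS leq_eqVlt => /orP[/eqP<- | ll'] lh.
  exact: bS.
by rewrite (ltn_trans (IH ll' (ltnW lh))) // bS // (leq_trans l0 (ltnW ll')).
Qed.

Lemma ramgrp_eq_nojump u w : (0 < u <= w)%N ->
  (forall j, (u <= j < w)%N -> forall i, (0 < i < h)%N -> j != b i) ->
  ramgrp v t u = ramgrp v t w.
Proof.
case/andP=> u0; elim: w => [|w IH]; first by rewrite leqn0 => /eqP u_eq0; rewrite u_eq0 in u0.
rewrite leq_eqVlt => /orP[/eqP-> // | uw] nojump.
rewrite ltnS in uw; rewrite IH //; last first.
  by move=> j /andP[uj jw]; apply: nojump; rewrite uj ltnW.
have w0 : (0 < w)%N by apply: leq_trans uw.
apply/eqP/negPn/negP => /(ramgrp_jump w0) [i hi w_bi].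
have : w != b i by apply: nojump hi; rewrite uw /=.
by rewrite w_bi eqxx.
Qed.

Lemma b_leq l l' : (0 < l)%N -> (l <= l')%N -> (l' < h)%N -> (b l <= b l')%N.
Proof. by move=> l0; rewrite leq_eqVlt => /orP[/eqP-> // | ll' l'h]; rewrite ltnW ?b_ltn. Qed.

Lemma ramgrp_eq_b i j : (0 < i < h)%N -> (0 < j <= b i)%N -> ((1 < i)%N -> (b i.-1 < j)%N) ->
  ramgrp v t j = ramgrp v t (b i).
Proof.
move=> /andP[i0 ih] j_bi bi1_j; apply: ramgrp_eq_nojump => // j' /andP[jj' j'bi] l /andP[l0 lh].
have [li | il] := ltnP l i.
  have i1 : (1 < i)%N by lia.
  have : (b l <= b i.-1)%N by apply: b_leq; lia.
  by have := bi1_j i1; lia.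
have : (b i <= b l)%N by apply: b_leq.
lia.
Qed.

Lemma ramgrp0 : ramgrp v t 0 = Gal_F F.
Proof. by apply/eqP; rewrite eqEsubset ramgrp_sub_Gal -ramgrp1 ramgrp_subS. Qed.

Lemma card_Gb l : (0 < l <= h)%N -> #|Gb v t h b l| = (p ^ \sum_(l <= j < h) n j)%N.
Proof.
move hlE : (h - l)%N => m; elim: m l hlE => [|m IH] l hlE /andP[l0 lh].
  have -> : l = h by apply/eqP; rewrite eqn_leq lh -subn_eq0 hlE.
  by rewrite /Gb ltnn andbF cards1 big_geq.
have lh' : (l < h)%N by rewrite -subn_gt0 hlE.
have hlE' : (h - l.+1)%N = m by rewrite subnS hlE.
by rewrite card_Gb_step ?l0 ?lh' // (IH l.+1 hlE' lh') (big_ltn lh') expnD.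
Qed.

Lemma card_ramgrp_b i : (0 < i < h)%N -> #|ramgrp v t (b i)| = (p ^ \sum_(i <= j < h) n j)%N.
Proof. by case/andP=> i0 ih; rewrite -card_Gb /Gb ?i0 ?ih // ltnW. Qed.

Lemma ramgrp_b1 : (1 < h)%N -> ramgrp v t (b 1) = Gal_F F.
Proof.
by move=> h1; rewrite -ramgrp1 (@ramgrp_eq_b 1 1) ?h1 // b_gt0 ?h1.
Qed.

Lemma card_Gal_F : (1 < h)%N -> #|Gal_F F| = (p ^ \sum_(1 <= j < h) n j)%N.
Proof. by move=> h1; rewrite -ramgrp_b1 // card_ramgrp_b ?h1. Qed.

Lemma herbrand_b1 : (1 < h)%N -> herbrand v t (b 1) = (b 1)%:R.
Proof.
move=> h1; rewrite (@herbrand_const 0 (b 1) (Gal_F F)) // => [|j /andP[j0 jb1]].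
  by rewrite herbrand0 add0r subn0 ramgrp0 divff ?mulr1 // pnatr_eq0 -lt0n cardG_gt0.
by rewrite -ramgrp_b1 // (@ramgrp_eq_b 1) ?h1 ?j0.
Qed.

Lemma herbrand_b_step i : (1 < i < h)%N ->
  herbrand v t (b i) =
  herbrand v t (b i.-1) + (b i - b i.-1)%:R / (p ^ \sum_(1 <= j < i) n j)%:R.
Proof.
move=> hi; have bi1_bi : (b i.-1 < b i)%N by apply: b_ltn; lia.
rewrite (@herbrand_const (b i.-1) (b i) (ramgrp v t (b i))) ?(ltnW bi1_bi) //; last first.
  by move=> j /andP[bj jb]; apply: ramgrp_eq_b => //; lia.
congr (_ + _); rewrite ramgrp0 card_Gal_F ?card_ramgrp_b; try lia.
rewrite (@big_cat_nat _ _ _ i 1 h) /=; try lia.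
rewrite expnD natrM invfM; congr (_ * _).
by rewrite mulrCA mulfV ?mulr1 // pnatr_eq0 expn_eq0; lia.
Qed.

Lemma n_pred_gt0 i : (1 < i < h)%N -> (0 < n i.-1)%N.
Proof.
move=> hi; have hi1 : (0 < i.-1 < h)%N by lia.
have : ramgrp v t (b i.-1) != ramgrp v t (b i.-1).+1.
  by apply: (proj2 (ramgrp_jump (b_gt0 hi1))); exists i.-1.
rewrite lt0n; apply: contraNneq => n0.
have bi1_bi : (b i.-1 < b i)%N by apply: b_ltn; lia.
have -> : ramgrp v t (b i.-1).+1 = ramgrp v t (b i) by apply: ramgrp_eq_b; lia.
have sub : ramgrp v t (b i) \subset ramgrp v t (b i.-1).
  rewrite -(@ramgrp_eq_b i (b i.-1).+1) ?ramgrp_subS //; lia.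
rewrite eq_sym eqEcard sub !card_ramgrp_b //; try lia.
rewrite big_ltn; last lia.
by rewrite n0 add0n prednK //; lia.
Qed.

Lemma herbrand_b_step_int i : (1 < i < h)%N ->
  (herbrand v t (b i) - herbrand v t (b i.-1) \is a Num.int) <->
  exists c, b i = (c * p ^ (\sum_(1 <= j < i) n j) + b i.-1)%N.
Proof.
move=> hi; have bi1_bi : (b i.-1 < b i)%N by apply: b_ltn; lia.
have -> : herbrand v t (b i) - herbrand v t (b i.-1) =
    (b i - b i.-1)%:R / (p ^ \sum_(1 <= j < i) n j)%:R.
  by rewrite herbrand_b_step // addrAC subrr add0r.
rewrite Qint_dvdn ?expn_gt0 ?p_gt0 //.
split=> [/dvdnP[c Hc] | [c ->]]; last by rewrite addnK dvdn_mull.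
by exists c; rewrite -Hc subnK // ltnW.
Qed.

Lemma upper_jumps_int_iff :
  (forall i, (0 < i < h)%N -> herbrand v t (b i) \is a Num.int) <->
  (forall i, (1 < i < h)%N -> exists c, b i = (c * p ^ (\sum_(1 <= j < i) n j) + b i.-1)%N).
Proof.
split=> [Hint i hi | Hstep i].
  by apply/herbrand_b_step_int => //; rewrite rpredB ?Hint //; lia.
elim: i => [|[|i] IH] /andP[// _ ih]; first by rewrite herbrand_b1 ?natr_int.
have hi : (1 < i.+2 < h)%N by rewrite ih.
have /(herbrand_b_step_int hi) diff_int := Hstep _ hi.
by rewrite -(subrK (herbrand v t (b i.+1)) (herbrand v t (b i.+2))) rpredD ?IH //= ltnW.
Qed.

End RamificationFiltration.

Lemma exists_seq_argmin (T : eqType) (s : seq T) (f : T -> int) : s != [::] ->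
  exists2 e, e \in s & forall e', e' \in s -> f e <= f e'.
Proof.
elim: s => [//|x [|y s] IH] _; first by exists x => [|e']; rewrite ?inE // => /eqP->.
have [e es emin] := IH isT; have [fx_le | fe_lt] := leP (f x) (f e).
  exists x => [|e']; rewrite inE ?eqxx // => /orP[/eqP-> // | /emin]; exact: le_trans.
exists e => [|e']; rewrite inE ?es ?orbT // => /orP[/eqP-> | /emin //]; exact: ltW.
Qed.

Lemma additive_poly_horner0 (R : nzRingType) (p m : nat) (c : nat -> R) (d : R) : (0 < p)%N ->
  ('X^(p ^ m) + \sum_(j < m) (c j)%:P * 'X^(p ^ j) - d%:P).[0] = - d.
Proof.
move=> p0; have Xp0 j : (0 : R) ^+ (p ^ j) = 0 by rewrite expr0n expn_eq0 (negbTE (lt0n_neq0 p0)).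
rewrite !hornerE hornerXn Xp0 horner_sum big1 ?add0r ?sub0r // => j _.
by rewrite hornerE hornerXn Xp0 mulr0.
Qed.

Lemma minPoly_root0 (F0 : fieldType) (L : fieldExtType F0) (K : {subfield L}) (x : L) :
  root (minPoly K x) 0 -> x = 0.
Proof.
move=> /rootP r0; have dX : 'X %| minPoly K x by rewrite -(subr0 'X) -root_factor_theorem; apply/rootP.
have := minPoly_irr (polyOverX _) dX.
rewrite -size_poly_eq1 size_polyX orbF eqp_monic ?monicX ?monic_minPoly // => /eqP mX.
by apply/eqP; rewrite -rootX mX root_minPoly.
Qed.

Section Monomials.
Variables (k : closedFieldType) (F : splittingFieldType (Kx k)).

Lemma cst_neq0 (c : k) : c != 0 -> cst F c != 0.
Proof. by move=> c0; rewrite scaler_eq0 oner_eq0 orbF tofrac_eq0 polyC_eq0. Qed.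

Lemma xF_neq0 : xF F != 0.
Proof. by rewrite scaler_eq0 oner_eq0 orbF tofrac_eq0 polyX_eq0. Qed.

Lemma mono_neq0 (fbar : nat -> F) (e : seq nat) :
  (forall j, (0 < j < size e)%N -> fbar j != 0) -> mono fbar e != 0.
Proof.
move=> fbar_neq0; rewrite mulf_neq0 ?expf_neq0 ?xF_neq0 // prodf_seq_neq0.
by apply/allP => j; rewrite mem_index_iota => hj; rewrite expf_neq0 ?fbar_neq0.
Qed.

Definition xfbar_exp (nu i : nat) : seq nat := nu :: rcons (nseq (i - 2) 0%N) 1%N.

Lemma size_xfbar_exp nu i : (1 < i)%N -> size (xfbar_exp nu i) = i.
Proof. by move=> i1; rewrite /= size_rcons size_nseq; lia. Qed.

Lemma nth_xfbar_exp nu i j : (1 < i)%N -> (0 < j < i)%N ->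
  nth 0%N (xfbar_exp nu i) j = (j == i.-1).
Proof.
case: j => // j i1 /andP[_ ji]; rewrite /= nth_rcons size_nseq.
have [lt_j | ge_j] := ltnP j (i - 2); first by rewrite nth_nseq lt_j; lia.
have -> : j = (i - 2)%N by lia.
by rewrite eqxx (_ : (i - 2).+1 = i.-1) ?eqxx //; lia.
Qed.

Lemma mono_xfbar_exp (fbar : nat -> F) nu i : (1 < i)%N ->
  mono fbar (xfbar_exp nu i) = xF F ^+ nu * fbar i.-1.
Proof.
move=> i1; rewrite /mono size_xfbar_exp //; congr (_ * _).
rewrite (eq_big_nat _ _ (F2 := fun j => fbar j ^+ (j == i.-1))); last first.
  by move=> j hj; rewrite nth_xfbar_exp.
rewrite -(prednK (ltnW i1)) big_nat_recr /=; last by rewrite -ltnS prednK // ltnW.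
rewrite eqxx expr1 big1_seq ?mul1r // => j /andP[_]; rewrite mem_index_iota => /andP[_ ji].
by rewrite (ltn_eqF ji).
Qed.

Lemma xfbar_exp_bounded (p : nat) (n : nat -> nat) nu i :
  (1 < p)%N -> (1 < i)%N -> (0 < n i.-1)%N ->
  forall j, (0 < j < i)%N -> (nth 0%N (xfbar_exp nu i) j < p ^ n j)%N.
Proof.
move=> p1 i1 n_gt0 j hj; rewrite nth_xfbar_exp //.
by case: eqP => [-> | _]; rewrite ?expn_gt0 ?(ltnW p1) // -[X in (X < _)%N](expn0 p) ltn_exp2l.
Qed.

End Monomials.

Section MinimalTerm.
Variables (k : closedFieldType) (F : splittingFieldType (Kx k)) (v : F -> int).
Variables (p h : nat) (n b : nat -> nat) (fbar : nat -> F) (i : nat).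
Variables (Di : F) (si : seq (seq nat)) (gami : seq nat -> k).
Hypotheses (Hv : dval v) (p_gt1 : (1 < p)%N) (hi : (1 < i < h)%N) (n_pred_gt0 : (0 < n i.-1)%N).
Hypothesis v_xF : v (xF F) = - (p ^ \sum_(1 <= j < h) n j)%N%:Z.
Hypothesis fbar_neq0 : forall j, (0 < j < i)%N -> fbar j != 0.
Hypothesis v_fbar_pred : v (fbar i.-1) = - (mbar p h n b i.-1)%:Z.
Hypotheses (Di_neq0 : Di != 0) (v_Di : v Di = - (p ^ n i * mbar p h n b i)%N%:Z).
Hypotheses (si_uniq : uniq si) (si_size : forall e, e \in si -> size e = i).
Hypothesis si_bounded : forall e, e \in si ->
  forall j, (0 < j < i)%N -> (nth 0%N e j < p ^ n j)%N.
Hypothesis gami_neq0 : forall e, e \in si -> gami e != 0.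
Hypothesis Di_expansion : Di = \sum_(e <- si) cst F (gami e) * mono fbar e.
Hypothesis v_mono_inj : forall e e' : seq nat, size e = i -> size e' = i ->
  (forall j, (0 < j < i)%N -> nth 0%N e j < p ^ n j)%N ->
  (forall j, (0 < j < i)%N -> nth 0%N e' j < p ^ n j)%N ->
  e != e' -> v (mono fbar e) != v (mono fbar e').

Let vM : forall a b : F, a != 0 -> b != 0 -> v (a * b) = v a + v b.
Proof. by case: Hv. Qed.

Let v_add : forall a b : F, a != 0 -> b != 0 -> a + b != 0 ->
  Num.min (v a) (v b) <= v (a + b).
Proof. by case: Hv. Qed.

Let v_cst (c : k) : c != 0 -> v (cst F c) = 0.
Proof. by case: Hv => _ _ + _; apply. Qed.

Let mono_si_neq0 e : e \in si -> mono fbar e != 0.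
Proof. by move=> es; apply: mono_neq0; rewrite si_size. Qed.

Let term_neq0 e : e \in si -> cst F (gami e) * mono fbar e != 0.
Proof. by move=> es; rewrite mulf_neq0 ?cst_neq0 ?gami_neq0 ?mono_si_neq0. Qed.

Let v_term e : e \in si -> v (cst F (gami e) * mono fbar e) = v (mono fbar e).
Proof. by move=> es; rewrite vM ?cst_neq0 ?gami_neq0 ?mono_si_neq0 // v_cst ?gami_neq0 ?add0r. Qed.

Lemma v_min_term e : min_term v fbar si e -> v Di = v (mono fbar e).
Proof.
case=> es e_min; rewrite Di_expansion -v_term //.
apply: (val_sum_min vM v_add) => // e' e's ne; rewrite !v_term //; exact: e_min.
Qed.

Lemma exists_min_term : exists e, min_term v fbar si e.
Proof.
have : si != [::] by apply: contraNneq Di_neq0 => si0; rewrite Di_expansion si0 big_nil.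
case/(exists_seq_argmin (fun e => v (mono fbar e))) => e es e_min.
exists e; split=> // e' e's ne; rewrite lt_neqAle e_min // andbT.
by apply: v_mono_inj; rewrite ?si_size ?(eq_sym e) //; apply: si_bounded.
Qed.

Lemma v_mono_xfbar nu : v (mono fbar (xfbar_exp nu i)) =
  - (p ^ (\sum_(i <= j < h) n j) * (nu * p ^ (\sum_(1 <= j < i) n j) + b i.-1))%N%:Z.
Proof.
have i1 : (1 < i)%N by case/andP: hi.
rewrite mono_xfbar_exp // vM ?expf_neq0 ?xF_neq0 ?fbar_neq0 //; last by lia.
rewrite (valX vM) ?xF_neq0 // v_xF v_fbar_pred /mbar prednK; last by lia.
rewrite (@big_cat_nat _ _ _ i 1 h) /=; try lia.
by rewrite expnD !PoszM PoszD !PoszM; ring.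
Qed.

Lemma v_Di_eq : v Di = - (p ^ (\sum_(i <= j < h) n j) * b i)%N%:Z.
Proof. by rewrite v_Di /mbar mulnA -expnD -big_ltn //; case/andP: hi. Qed.

Lemma v_mono_xfbar_eq nu : v (mono fbar (xfbar_exp nu i)) = v Di <->
  b i = (nu * p ^ (\sum_(1 <= j < i) n j) + b i.-1)%N.
Proof.
rewrite v_mono_xfbar v_Di_eq; split=> [/oppr_inj [] /eqP | ->] //.
by rewrite eqn_pmul2l ?expn_gt0 ?(ltnW p_gt1) // => /eqP.
Qed.

Lemma min_term_xfbar_iff :
  (exists nu, gami (xfbar_exp nu i) != 0 /\ min_term v fbar si (xfbar_exp nu i)) <->
  exists c, b i = (c * p ^ (\sum_(1 <= j < i) n j) + b i.-1)%N.
Proof.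
have i1 : (1 < i)%N by case/andP: hi.
split=> [[nu [_ e_min]] | [c /v_mono_xfbar_eq v_xfbar]].
  by exists nu; apply/v_mono_xfbar_eq; rewrite (v_min_term e_min).
have [e [es e_min]] := exists_min_term; exists c.
suff -> : xfbar_exp c i = e by split; [apply: gami_neq0 | split].
apply/eqP/negPn/negP => ne.
have := v_mono_inj (size_xfbar_exp c i1) (si_size es)
  (xfbar_exp_bounded c p_gt1 i1 n_pred_gt0) (si_bounded es) ne.
by rewrite v_xfbar (v_min_term (conj es e_min)) eqxx.
Qed.

End MinimalTerm.

Theorem theorem3p1
  (k : closedFieldType) (p : nat)
  (F : splittingFieldType (Kx k))
  (v : F -> int) (t : F) (h : nat) (b n : nat -> nat)
  (fbar D : nat -> F) (a : nat -> nat -> k)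
  (s : nat -> seq (seq nat)) (gam : nat -> seq nat -> k)
  (Hchar : p \in [pchar k]) (Hp5 : (5 <= p)%N)
  (Hgal : galois 1%VS (fullv : {vspace F}))
  (Hv : dval v) (Ht : v t = 1) (Hvx : v (xF F) = - (#|Gal_F F|%:Z))
  (Huniq : forall w, dval w -> w (xF F) < 0 -> forall y : F, y != 0 -> w y = v y)
  (Hunram : forall w, dval w -> 0 <= w (xF F) ->
              exists f : Kx k, w (f%:A) = 1)
  (HpG : (p.-group (Gal_F F))%g) (HG1 : (1 < #|Gal_F F|)%N)
  (HGG1 : ramgrp v t 1 = Gal_F F)
  (Hbinc : forall i, (0 < i)%N -> (i.+1 < h)%N -> (b i < b i.+1)%N)
  (Hjump : forall u, (0 < u)%N ->
     ramgrp v t u != ramgrp v t u.+1 <-> exists2 i, (0 < i < h)%N & u = b i)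
  (Hn : forall i, (0 < i < h)%N ->
     #|Gb v t h b i| = (p ^ n i * #|Gb v t h b i.+1|)%N)
  (Hbp : forall i, (0 < i < h)%N -> coprime (b i) p)
  (Hfin : forall i, (0 < i < h)%N -> fbar i \in Fi v t h b i.+1)
  (Hfgen : forall i, (0 < i < h)%N -> <<Fi v t h b i; fbar i>>%VS = Fi v t h b i.+1)
  (Hfnz : forall i, (0 < i < h)%N -> fbar i != 0)
  (Hfval : forall i, (0 < i < h)%N -> v (fbar i) = - ((mbar p h n b i)%:Z))
  (Hfpole : forall i, (0 < i < h)%N ->
     forall w, dval w -> 0 <= w (xF F) -> 0 <= w (fbar i))
  (HDin : forall i, (0 < i < h)%N -> D i \in Fi v t h b i)
  (Hmin : forall i, (0 < i < h)%N ->
     minPoly (Fi v t h b i) (fbar i) =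
       'X^(p ^ n i) + \sum_(j < n i) (cst F (a i j))%:P * 'X^(p ^ j) - (D i)%:P)
  (Hsuniq : forall i, (0 < i < h)%N -> uniq (s i))
  (Hssize : forall i, (0 < i < h)%N -> forall e, e \in s i -> size e = i)
  (Hsrange : forall i, (0 < i < h)%N -> forall e, e \in s i ->
     forall j, (0 < j < i)%N -> (nth 0%N e j < p ^ n j)%N)
  (Hgamnz : forall i, (0 < i < h)%N -> forall e, e \in s i -> gam i e != 0)
  (HDexp : forall i, (0 < i < h)%N ->
     D i = \sum_(e <- s i) cst F (gam i e) * mono fbar e)
  (Hdist : forall i, (0 < i < h)%N -> forall e e' : seq nat,
     size e = i -> size e' = i ->
     (forall j, (0 < j < i)%N -> nth 0%N e j < p ^ n j)%N ->
     (forall j, (0 < j < i)%N -> nth 0%N e' j < p ^ n j)%N ->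
     e != e' -> v (mono fbar e) != v (mono fbar e'))
  (HvD : forall i, (0 < i < h)%N -> v (D i) = - ((p ^ n i * mbar p h n b i)%N%:Z)) :
  (forall i, (0 < i < h)%N -> herbrand v t (b i) \is a Num.int)
  <->
  (forall i, (1 < i < h)%N ->
     exists nu0 : nat,
       let e := nu0 :: rcons (nseq (i - 2) 0%N) 1%N in
       gam i e != 0 /\ min_term v fbar (s i) e).
Proof.
have p_gt1 : (1 < p)%N by apply: leq_trans Hp5.
have p_gt0 := ltnW p_gt1.
have [h_le1 | h_gt1] := leqP h 1; first by split=> _ i /andP[i0 ih]; exfalso; lia.
have b_gt0 i : (0 < i < h)%N -> (0 < b i)%N.
  by move=> hi; rewrite lt0n; apply: contraTneq (Hbp i hi) => ->; rewrite /coprime gcd0n; lia.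
have v_xF : v (xF F) = - (p ^ \sum_(1 <= j < h) n j)%N%:Z.
  by rewrite Hvx (card_Gal_F p_gt0 HGG1 b_gt0 Hbinc Hjump Hn).
have D_neq0 i : (0 < i < h)%N -> D i != 0.
  move=> hi; apply: contra_neq (Hfnz i hi) => D0; apply: (minPoly_root0 (K := Fi v t h b i)).
  by rewrite Hmin // /root (additive_poly_horner0 _ (fun j => cst F (a i j))) ?D0 ?oppr0.
rewrite (upper_jumps_int_iff p_gt0 HGG1 b_gt0 Hbinc Hjump Hn).
have min_term_iff i : (1 < i < h)%N ->
    (exists nu, gam i (xfbar_exp nu i) != 0 /\ min_term v fbar (s i) (xfbar_exp nu i)) <->
    exists c, b i = (c * p ^ (\sum_(1 <= j < i) n j) + b i.-1)%N.
  move=> hi; have hi0 : (0 < i < h)%N by lia.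
  have hi1 : (0 < i.-1 < h)%N by lia.
  apply: (min_term_xfbar_iff Hv p_gt1 hi (n_pred_gt0 p_gt0 b_gt0 Hbinc Hjump Hn hi) v_xF)
    (Hfval _ hi1) (D_neq0 _ hi0) (HvD _ hi0) (Hsuniq _ hi0) (Hssize _ hi0)
    (Hsrange _ hi0) (Hgamnz _ hi0) (HDexp _ hi0) (Hdist _ hi0).
  by move=> j hj; apply: Hfnz; lia.
by split=> H i hi; [apply/(min_term_iff i hi) | apply/(min_term_iff i hi)]; apply: H.
Qed.
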